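(* Let $\mu>0$, $\lambda\in(0,1)$, $a_{b1},a_{b2}\in[-1,1]$ and $b>0$. Consider a single agent moving according to the closed-loop dynamics of Configuration I (see context), and call a state a circling equilibrium if $\rho_{1b1},\rho_{1b2}>0$, the agent is not collinear with the two beacons, and the time derivatives of the four shape variables $\bar x_{1b1},\bar x_{1b2},\rho_{1b1},\rho_{1b2}$ all vanish. Then a circling equilibrium exists if and only if one of the following holds, and at any circling equilibrium $\bar x_{1b1}=\bar x_{1b2}=0$ and the distances are as follows. (a) If $\lambda a_{b1}=(1-\lambda)a_{b2}<0$, then $$\rho_{1b1}=\rho_{1b2}=\frac{1}{-4\mu\lambda a_{b1}}\Bigl(1+\sqrt{1+(4\mu\lambda a_{b1}b)^2}\Bigr).$$ (b) If $\lambda a_{b1}\neq(1-\lambda)a_{b2}$ and $\lambda a_{b1}+(1-\lambda)a_{b2}<0$, then $\rho_{1b1}=(\rho_{1b+}-\rho_{1b-})/2$ and $\rho_{1b2}=(\rho_{1b+}+\rho_{1b-})/2$, where $$\rho_{1b+}=\frac{1+\sqrt{1+\bigl[2b\mu(\lambda a_{b1}+(1-\lambda)a_{b2})\bigr]^2}}{-\mu\bigl(\lambda a_{b1}+(1-\lambda)a_{b2}\bigr)},\qquad \rho_{1b-}=\frac{-1+\sqrt{1+\bigl[2b\mu(\lambda a_{b1}-(1-\lambda)a_{b2})\bigr]^2}}{-\mu\bigl(\lambda a_{b1}-(1-\lambda)a_{b2}\bigr)}.$$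
   Context: Configuration I: two fixed beacons at $\mathbf r_{b1}=(0,0,-b)$ and $\mathbf r_{b2}=(0,0,b)$ in $\mathbb R^3$, and one agent with position $\mathbf r_1\in\mathbb R^3$ and unit velocity $\mathbf x_1$. Write $\mathbf r_{1bi}=\mathbf r_1-\mathbf r_{bi}$, $\rho_{1bi}=|\mathbf r_{1bi}|$, $\bar x_{1bi}=\mathbf x_1\cdot \mathbf r_{1bi}/\rho_{1bi}$ ($i=1,2$). The agent moves with unit speed under the beacon-referenced constant-bearing control law, whose closed loop is $$\dot{\mathbf r}_1=\mathbf x_1,\qquad \dot{\mathbf x}_1=-(1-\lambda)\mu(\bar x_{1b2}-a_{b2})\Bigl(\tfrac{\mathbf r_{1b2}}{\rho_{1b2}}-\bar x_{1b2}\mathbf x_1\Bigr)-\lambda\mu(\bar x_{1b1}-a_{b1})\Bigl(\tfrac{\mathbf r_{1b1}}{\rho_{1b1}}-\bar x_{1b1}\mathbf x_1\Bigr).$$ Here $\mu>0$ is a gain, $\lambda$ an attention weight and $a_{b1},a_{b2}$ the constant-bearing parameters with respect to the two beacons. The time derivatives of $\bar x_{1b1},\bar x_{1b2},\rho_{1b1},\rho_{1b2}$ along this flow depend only on these four variables (using $\frac{\mathbf r_{1b1}}{\rho_{1b1}}\cdot\frac{\mathbf r_{1b2}}{\rho_{1b2}}=\frac{\rho_{1b1}^2+\rho_{1b2}^2-4b^2}{2\rho_{1b1}\rho_{1b2}}$). *)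

From Stdlib Require Import Reals Lra.
Open Scope R_scope.

Record vec3 : Type := mkV { vx : R; vy : R; vz : R }.

Definition vadd (u v : vec3) : vec3 := mkV (vx u + vx v) (vy u + vy v) (vz u + vz v).
Definition vsub (u v : vec3) : vec3 := mkV (vx u - vx v) (vy u - vy v) (vz u - vz v).
Definition vscale (k : R) (v : vec3) : vec3 := mkV (k * vx v) (k * vy v) (k * vz v).
Definition vdot (u v : vec3) : R := vx u * vx v + vy u * vy v + vz u * vz v.
Definition vnorm (v : vec3) : R := sqrt (vdot v v).
Definition vcross (u v : vec3) : vec3 :=
  mkV (vy u * vz v - vz u * vy v) (vz u * vx v - vx u * vz v) (vx u * vy v - vy u * vx v).
Definition vzero : vec3 := mkV 0 0 0.

Definition collinear (p q s : vec3) : Prop := vcross (vsub q p) (vsub s p) = vzero.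

Definition rb1 (b : R) : vec3 := mkV 0 0 (- b).
Definition rb2 (b : R) : vec3 := mkV 0 0 b.

Section Shape.
Variables (b : R) (r1 x1 : vec3).

Definition r1b1 : vec3 := vsub r1 (rb1 b).
Definition r1b2 : vec3 := vsub r1 (rb2 b).
Definition rho1b1 : R := vnorm r1b1.
Definition rho1b2 : R := vnorm r1b2.
Definition u1b1 : vec3 := vscale (/ rho1b1) r1b1.
Definition u1b2 : vec3 := vscale (/ rho1b2) r1b2.
Definition xbar1b1 : R := vdot x1 u1b1.
Definition xbar1b2 : R := vdot x1 u1b2.
End Shape.

Definition x1dot (mu lam ab1 ab2 b : R) (r1 x1 : vec3) : vec3 :=
  vadd
    (vscale (- ((1 - lam) * mu * (xbar1b2 b r1 x1 - ab2)))
       (vsub (u1b2 b r1) (vscale (xbar1b2 b r1 x1) x1)))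
    (vscale (- (lam * mu * (xbar1b1 b r1 x1 - ab1)))
       (vsub (u1b1 b r1) (vscale (xbar1b1 b r1 x1) x1))).

(** Time derivatives of the shape variables along the flow
    (r1' = x1, x1' = x1dot), computed by the chain rule:
      d/dt rho_i  = (r_{1bi} . r1') / rho_i = x1 . u_i
      d/dt u_i    = (r1' - rho_i' u_i) / rho_i
      d/dt xbar_i = x1' . u_i + x1 . (d/dt u_i). *)
Definition rho1b1_dot (b : R) (r1 x1 : vec3) : R := vdot x1 (u1b1 b r1).
Definition rho1b2_dot (b : R) (r1 x1 : vec3) : R := vdot x1 (u1b2 b r1).

Definition u1b1_dot (b : R) (r1 x1 : vec3) : vec3 :=
  vscale (/ rho1b1 b r1) (vsub x1 (vscale (rho1b1_dot b r1 x1) (u1b1 b r1))).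
Definition u1b2_dot (b : R) (r1 x1 : vec3) : vec3 :=
  vscale (/ rho1b2 b r1) (vsub x1 (vscale (rho1b2_dot b r1 x1) (u1b2 b r1))).

Definition xbar1b1_dot (mu lam ab1 ab2 b : R) (r1 x1 : vec3) : R :=
  vdot (x1dot mu lam ab1 ab2 b r1 x1) (u1b1 b r1) + vdot x1 (u1b1_dot b r1 x1).
Definition xbar1b2_dot (mu lam ab1 ab2 b : R) (r1 x1 : vec3) : R :=
  vdot (x1dot mu lam ab1 ab2 b r1 x1) (u1b2 b r1) + vdot x1 (u1b2_dot b r1 x1).

Definition circling_equilibrium (mu lam ab1 ab2 b : R) (r1 x1 : vec3) : Prop :=
  vnorm x1 = 1 /\
  0 < rho1b1 b r1 /\ 0 < rho1b2 b r1 /\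
  ~ collinear r1 (rb1 b) (rb2 b) /\
  xbar1b1_dot mu lam ab1 ab2 b r1 x1 = 0 /\
  xbar1b2_dot mu lam ab1 ab2 b r1 x1 = 0 /\
  rho1b1_dot b r1 x1 = 0 /\
  rho1b2_dot b r1 x1 = 0.

From Stdlib Require Import Reals Lra Psatz.
Open Scope R_scope.

(* Since d/dt rho_i = xbar_i, an equilibrium has its velocity orthogonal to both
   lines of sight, and the conditions d/dt xbar_i = 0, multiplied by
   rho_1 rho_2 and combined with the law of cosines, decouple in the sum
   s = rho_1 + rho_2 and difference d = rho_2 - rho_1 into two quadratics of the
   same shape c (t^2 - 4 b^2) = 2 t, with c = -mu (A + B) for t = s and
   c = mu (A - B) for t = d, where A = lam ab1 and B = (1 - lam) ab2.
   Non-collinearity with the beacons is the strict triangle inequality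
   |d| < 2b < s; it selects the root of modulus > 2b for s, which exists
   exactly when c > 0, and the root of modulus < 2b for d, which always exists.
   Conversely every such pair is realized by a point of the plane y = 0 moving
   with velocity e_y. *)

Lemma vdot_comm u v : vdot u v = vdot v u.
Proof. unfold vdot; ring. Qed.

Lemma vdot_addl u v w : vdot (vadd u v) w = vdot u w + vdot v w.
Proof. unfold vdot, vadd; simpl; ring. Qed.

Lemma vdot_subl u v w : vdot (vsub u v) w = vdot u w - vdot v w.
Proof. unfold vdot, vsub; simpl; ring. Qed.

Lemma vdot_subr u v w : vdot u (vsub v w) = vdot u v - vdot u w.
Proof. unfold vdot, vsub; simpl; ring. Qed.

Lemma vdot_scalel k u v : vdot (vscale k u) v = k * vdot u v.
Proof. unfold vdot, vscale; simpl; ring. Qed.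

Lemma vdot_scaler k u v : vdot u (vscale k v) = k * vdot u v.
Proof. unfold vdot, vscale; simpl; ring. Qed.

Lemma vdot_self_ge0 v : 0 <= vdot v v.
Proof. destruct v; unfold vdot; simpl; nra. Qed.

Lemma vnorm_sqr v : vnorm v ^ 2 = vdot v v.
Proof. unfold vnorm. rewrite pow2_sqrt; auto using vdot_self_ge0. Qed.

Lemma vnorm_eq v p : 0 <= p -> vdot v v = p^2 -> vnorm v = p.
Proof. intros Hp E. unfold vnorm. rewrite E. apply sqrt_pow2, Hp. Qed.

Lemma vdot_self_pos v : v <> vzero -> 0 < vdot v v.
Proof.
  destruct v as [x y z]; unfold vdot, vzero; simpl; intros Hv.
  destruct (Req_dec x 0) as [->|Hx]; [destruct (Req_dec y 0) as [->|Hy];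
    [destruct (Req_dec z 0) as [->|Hz]|]|].
  - exfalso; apply Hv; reflexivity.
  - assert (0 < z*z) by (apply Rsqr_pos_lt; exact Hz). nra.
  - assert (0 < y*y) by (apply Rsqr_pos_lt; exact Hy). nra.
  - assert (0 < x*x) by (apply Rsqr_pos_lt; exact Hx). nra.
Qed.

Lemma vdot_vcross_self u v :
  vdot (vcross u v) (vcross u v) = vdot u u * vdot v v - vdot u v ^ 2.
Proof. destruct u, v; unfold vdot, vcross; simpl; ring. Qed.

Lemma vcross_vsub_flip p q s : vcross (vsub p q) (vsub p s) = vcross (vsub q p) (vsub s p).
Proof. destruct p, q, s; unfold vcross, vsub; simpl; f_equal; ring. Qed.

Lemma law_of_cosines b r1 :
  rho1b1 b r1 ^ 2 + rho1b2 b r1 ^ 2 - 2 * vdot (r1b1 b r1) (r1b2 b r1) = 4 * b^2.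
Proof.
  unfold rho1b1, rho1b2. rewrite !vnorm_sqr.
  destruct r1; unfold r1b1, r1b2, rb1, rb2, vdot, vsub; simpl; ring.
Qed.

Lemma rho_strict_triangle b r1 :
  ~ collinear r1 (rb1 b) (rb2 b) ->
  (rho1b2 b r1 - rho1b1 b r1)^2 < 4*b^2 < (rho1b1 b r1 + rho1b2 b r1)^2.
Proof.
  intros Hnc.
  set (w := vcross (r1b1 b r1) (r1b2 b r1)).
  assert (Hcross : 0 < vdot w w).
  { apply vdot_self_pos. unfold w, r1b1, r1b2. rewrite vcross_vsub_flip. exact Hnc. }
  unfold w in Hcross. rewrite vdot_vcross_self, <- !vnorm_sqr in Hcross.
  fold (rho1b1 b r1) (rho1b2 b r1) in Hcross.
  pose proof (law_of_cosines b r1) as Hcos.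
  set (P := vdot (r1b1 b r1) (r1b2 b r1)) in *.
  set (p1 := rho1b1 b r1) in *. set (p2 := rho1b2 b r1) in *.
  assert (0 <= p1) by apply sqrt_pos. assert (0 <= p2) by apply sqrt_pos.
  assert (Hlt : P^2 < (p1*p2)^2) by nra.
  assert (HQ : 0 <= p1*p2) by nra.
  assert (0 < p1*p2 + P).
  { destruct (Rlt_or_le 0 (p1*p2 + P)) as [h|h]; [exact h|nra]. }
  assert (0 < p1*p2 - P).
  { destruct (Rlt_or_le 0 (p1*p2 - P)) as [h|h]; [exact h|nra]. }
  split; nra.
Qed.

Lemma rho_realized b p1 p2 :
  0 < b -> 0 < p1 -> 0 < p2 -> (p2 - p1)^2 < 4*b^2 < (p1 + p2)^2 ->
  exists X Z, 0 < X /\ rho1b1 b (mkV X 0 Z) = p1 /\ rho1b2 b (mkV X 0 Z) = p2.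
Proof.
  intros Hb H1 H2 [Hd Hs].
  set (Z := (p1^2 - p2^2) / (4*b)).
  assert (Hheight : 16*b^2 * (p1^2 - (Z+b)^2) = ((p1+p2)^2 - 4*b^2) * (4*b^2 - (p2-p1)^2))
    by (unfold Z; field; lra).
  assert (HX2 : 0 < p1^2 - (Z+b)^2).
  { assert (0 < ((p1+p2)^2 - 4*b^2) * (4*b^2 - (p2-p1)^2)) by (apply Rmult_lt_0_compat; lra).
    destruct (Rlt_or_le 0 (p1^2 - (Z+b)^2)) as [h|h]; [exact h|nra]. }
  set (X := sqrt (p1^2 - (Z+b)^2)).
  assert (HX : X * X = p1^2 - (Z+b)^2) by apply sqrt_sqrt, Rlt_le, HX2.
  exists X, Z. split; [apply sqrt_lt_R0, HX2|]. split.
  - apply vnorm_eq; [lra|]. unfold r1b1, rb1, vdot, vsub; simpl.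
    transitivity (X * X + (Z+b)^2); [ring|]. rewrite HX; ring.
  - apply vnorm_eq; [lra|]. unfold r1b2, rb2, vdot, vsub; simpl.
    transitivity (X * X + (Z-b)^2); [ring|]. rewrite HX; unfold Z; field; lra.
Qed.

Lemma off_axis_not_collinear b X Z :
  0 < b -> X <> 0 -> ~ collinear (mkV X 0 Z) (rb1 b) (rb2 b).
Proof.
  intros Hb HX Hc. apply (f_equal vy) in Hc.
  unfold vcross, vsub, rb1, rb2, vzero in Hc; simpl in Hc.
  apply HX. nra.
Qed.

Lemma xbar1b1_dot_perp mu lam ab1 ab2 b r1 x1 :
  vdot x1 x1 = 1 -> 0 < rho1b1 b r1 -> 0 < rho1b2 b r1 ->
  xbar1b1 b r1 x1 = 0 -> xbar1b2 b r1 x1 = 0 ->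
  rho1b1 b r1 * rho1b2 b r1 * xbar1b1_dot mu lam ab1 ab2 b r1 x1 =
  (1-lam)*ab2*mu * vdot (r1b1 b r1) (r1b2 b r1)
  + lam*ab1*mu * (rho1b1 b r1 * rho1b2 b r1) + rho1b2 b r1.
Proof.
  intros Hx H1 H2 X1 X2.
  assert (N1 := vnorm_sqr (r1b1 b r1)); fold (rho1b1 b r1) in N1.
  unfold xbar1b1_dot, u1b1_dot, x1dot.
  change (rho1b1_dot b r1 x1) with (xbar1b1 b r1 x1).
  rewrite X1, X2.
  unfold u1b1, u1b2.
  rewrite !vdot_addl, !vdot_scalel, !vdot_subl, !vdot_scalel, !vdot_scaler,
    !vdot_subr, !vdot_scaler.
  rewrite Hx, (vdot_comm (r1b2 b r1)), <- N1.
  field; lra.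
Qed.

Lemma xbar1b2_dot_perp mu lam ab1 ab2 b r1 x1 :
  vdot x1 x1 = 1 -> 0 < rho1b1 b r1 -> 0 < rho1b2 b r1 ->
  xbar1b1 b r1 x1 = 0 -> xbar1b2 b r1 x1 = 0 ->
  rho1b1 b r1 * rho1b2 b r1 * xbar1b2_dot mu lam ab1 ab2 b r1 x1 =
  lam*ab1*mu * vdot (r1b1 b r1) (r1b2 b r1)
  + (1-lam)*ab2*mu * (rho1b1 b r1 * rho1b2 b r1) + rho1b1 b r1.
Proof.
  intros Hx H1 H2 X1 X2.
  assert (N2 := vnorm_sqr (r1b2 b r1)); fold (rho1b2 b r1) in N2.
  unfold xbar1b2_dot, u1b2_dot, x1dot.
  change (rho1b2_dot b r1 x1) with (xbar1b2 b r1 x1).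
  rewrite X1, X2.
  unfold u1b1, u1b2.
  rewrite !vdot_addl, !vdot_scalel, !vdot_subl, !vdot_scalel, !vdot_scaler,
    !vdot_subr, !vdot_scaler.
  rewrite Hx, <- N2.
  field; lra.
Qed.

Lemma shape_equations_sum_diff mu A B b p1 p2 P :
  p1^2 + p2^2 - 2*P = 4*b^2 ->
  (B*mu*P + A*mu*(p1*p2) + p2 = 0 /\ A*mu*P + B*mu*(p1*p2) + p1 = 0) <->
  (- mu*(A+B)*((p1+p2)^2 - 4*b^2) = 2*(p1+p2) /\
   mu*(A-B)*((p2-p1)^2 - 4*b^2) = 2*(p2-p1)).
Proof.
  intros Hcos.
  replace ((p1+p2)^2 - 4*b^2) with (2*(P + p1*p2)) by lra.
  replace ((p2-p1)^2 - 4*b^2) with (2*(P - p1*p2)) by lra.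
  split; intros [E1 E2]; split; lra.
Qed.

Lemma quadratic_complete_sq b c t :
  c * (t^2 - 4*b^2) = 2*t -> (c*t - 1)^2 = 1 + (2*b*c)^2.
Proof.
  intros E.
  replace ((c*t - 1)^2) with (c * (c * (t^2 - 4*b^2) - 2*t) + 1 + (2*b*c)^2) by ring.
  rewrite E; ring.
Qed.

Lemma quadratic_of_complete_sq b c t :
  c <> 0 -> (c*t - 1)^2 = 1 + (2*b*c)^2 -> c * (t^2 - 4*b^2) = 2*t.
Proof.
  intros Hc E.
  apply (Rmult_eq_reg_l c); [|exact Hc].
  replace (c * (c * (t^2 - 4*b^2))) with ((c*t - 1)^2 - 1 - (2*b*c)^2 + c * (2*t)) by ring.
  rewrite E; ring.
Qed.

Lemma quadratic_outer_root b c t :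
  0 < t -> 4*b^2 < t^2 -> c * (t^2 - 4*b^2) = 2*t ->
  0 < c /\ t = (1 + sqrt (1 + (2*b*c)^2)) / c.
Proof.
  intros Ht Htb E.
  assert (Hc : 0 < c) by nra.
  assert (Hct : 1 < c*t) by nra.
  split; [exact Hc|].
  rewrite <- (quadratic_complete_sq b c t E), sqrt_pow2 by lra.
  field; lra.
Qed.

Lemma quadratic_inner_root b c t :
  c <> 0 -> t^2 < 4*b^2 -> c * (t^2 - 4*b^2) = 2*t ->
  t = (-1 + sqrt (1 + (2*b*c)^2)) / - c.
Proof.
  intros Hc Htb E.
  assert (Hct : c*t <= 0) by nra.
  rewrite <- (quadratic_complete_sq b c t E), <- Rsqr_pow2, sqrt_Rsqr_abs, Rabs_left1 by lra.
  field; exact Hc.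
Qed.

Lemma quadratic_outer_root_exists b c :
  0 < c -> exists t, 0 < t /\ 4*b^2 < t^2 /\ c * (t^2 - 4*b^2) = 2*t.
Proof.
  intros Hc.
  set (S := sqrt (1 + (2*b*c)^2)).
  assert (HS : S^2 = 1 + (2*b*c)^2) by (apply pow2_sqrt; nra).
  assert (HS0 : 0 <= S) by apply sqrt_pos.
  exists ((1 + S) / c).
  assert (E : c * (((1 + S) / c)^2 - 4*b^2) = 2*((1 + S) / c)).
  { apply quadratic_of_complete_sq; [lra|].
    replace (c * ((1 + S) / c) - 1) with S by (field; lra). exact HS. }
  assert (Ht : 0 < (1 + S) / c) by (apply Rdiv_lt_0_compat; lra).
  repeat split; [exact Ht| nra | exact E].
Qed.

Lemma quadratic_inner_root_exists b c :
  0 < b -> exists t, t^2 < 4*b^2 /\ c * (t^2 - 4*b^2) = 2*t.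
Proof.
  intros Hb.
  destruct (Req_dec c 0) as [Hc|Hc].
  { exists 0. subst c. split; [nra|ring]. }
  set (S := sqrt (1 + (2*b*c)^2)).
  assert (HS : S^2 = 1 + (2*b*c)^2) by (apply pow2_sqrt; nra).
  assert (HS0 : 0 <= S) by apply sqrt_pos.
  assert (Hc2 : 0 < c^2) by (rewrite <- Rsqr_pow2; apply Rsqr_pos_lt; exact Hc).
  assert (HS1 : 1 < S).
  { assert (0 < (2*b*c)^2).
    { replace ((2*b*c)^2) with (4*b^2 * c^2) by ring.
      apply Rmult_lt_0_compat; [nra|exact Hc2]. }
    nra. }
  exists ((1 - S) / c).
  assert (Hct : c * ((1 - S) / c) = 1 - S) by (field; exact Hc).
  split.
  - apply (Rmult_lt_reg_l (c^2)); [exact Hc2|].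
    replace (c^2 * ((1 - S) / c)^2) with ((c * ((1 - S) / c))^2) by ring.
    rewrite Hct. nra.
  - apply quadratic_of_complete_sq; [exact Hc|].
    rewrite Hct. rewrite <- HS. ring.
Qed.

Definition equilibrium_distances (mu A B b p1 p2 : R) : Prop :=
  0 < p1 /\ 0 < p2 /\ (p2 - p1)^2 < 4*b^2 < (p1 + p2)^2 /\
  - mu * (A + B) * ((p1 + p2)^2 - 4*b^2) = 2 * (p1 + p2) /\
  mu * (A - B) * ((p2 - p1)^2 - 4*b^2) = 2 * (p2 - p1).

Lemma circling_equilibrium_distances mu lam ab1 ab2 b r1 x1 :
  circling_equilibrium mu lam ab1 ab2 b r1 x1 ->
  xbar1b1 b r1 x1 = 0 /\ xbar1b2 b r1 x1 = 0 /\
  equilibrium_distances mu (lam * ab1) ((1 - lam) * ab2) b (rho1b1 b r1) (rho1b2 b r1).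
Proof.
  intros (Hx & H1 & H2 & Hnc & D1 & D2 & X1 & X2).
  change (rho1b1_dot b r1 x1) with (xbar1b1 b r1 x1) in X1.
  change (rho1b2_dot b r1 x1) with (xbar1b2 b r1 x1) in X2.
  assert (Hx1 : vdot x1 x1 = 1) by (rewrite <- vnorm_sqr, Hx; ring).
  pose proof (xbar1b1_dot_perp mu lam ab1 ab2 b r1 x1 Hx1 H1 H2 X1 X2) as E1.
  pose proof (xbar1b2_dot_perp mu lam ab1 ab2 b r1 x1 Hx1 H1 H2 X1 X2) as E2.
  rewrite D1, Rmult_0_r in E1. rewrite D2, Rmult_0_r in E2.
  destruct (proj1 (shape_equations_sum_diff mu (lam * ab1) ((1 - lam) * ab2) b _ _ _
                     (law_of_cosines b r1))) as [Es Ed]; [lra|].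
  pose proof (rho_strict_triangle b r1 Hnc).
  unfold equilibrium_distances; tauto.
Qed.

Lemma equilibrium_distances_realized mu lam ab1 ab2 b p1 p2 :
  0 < b -> equilibrium_distances mu (lam * ab1) ((1 - lam) * ab2) b p1 p2 ->
  exists r1 x1, circling_equilibrium mu lam ab1 ab2 b r1 x1.
Proof.
  intros Hb (H1 & H2 & Htri & Es & Ed).
  destruct (rho_realized b p1 p2 Hb H1 H2 Htri) as (X & Z & HX & R1 & R2).
  set (r1 := mkV X 0 Z). set (x1 := mkV 0 1 0).
  assert (Hx1 : vdot x1 x1 = 1) by (unfold vdot; simpl; ring).
  assert (X1 : xbar1b1 b r1 x1 = 0)
    by (unfold xbar1b1, u1b1, r1b1, vdot, vscale, vsub; simpl; ring).
  assert (X2 : xbar1b2 b r1 x1 = 0)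
    by (unfold xbar1b2, u1b2, r1b2, vdot, vscale, vsub; simpl; ring).
  fold r1 in R1, R2.
  assert (H1' : 0 < rho1b1 b r1) by (rewrite R1; exact H1).
  assert (H2' : 0 < rho1b2 b r1) by (rewrite R2; exact H2).
  destruct (proj2 (shape_equations_sum_diff mu (lam * ab1) ((1 - lam) * ab2) b _ _ _
                     (law_of_cosines b r1))) as [E1 E2]; [rewrite R1, R2; auto|].
  pose proof (xbar1b1_dot_perp mu lam ab1 ab2 b r1 x1 Hx1 H1' H2' X1 X2) as D1.
  pose proof (xbar1b2_dot_perp mu lam ab1 ab2 b r1 x1 Hx1 H1' H2' X1 X2) as D2.
  assert (Hpp : rho1b1 b r1 * rho1b2 b r1 <> 0) by nra.
  exists r1, x1. repeat split; auto.
  - apply vnorm_eq; [lra|]. rewrite Hx1; ring.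
  - apply off_axis_not_collinear; lra.
  - apply (Rmult_eq_reg_l (rho1b1 b r1 * rho1b2 b r1)); [rewrite D1; lra|exact Hpp].
  - apply (Rmult_eq_reg_l (rho1b1 b r1 * rho1b2 b r1)); [rewrite D2; lra|exact Hpp].
Qed.

Section EquilibriumDistances.
Variables (mu A B b : R).
Hypotheses (Hmu : 0 < mu) (Hb : 0 < b).

Lemma equilibrium_distances_exist :
  A + B < 0 -> exists p1 p2, equilibrium_distances mu A B b p1 p2.
Proof.
  intros HAB.
  destruct (quadratic_outer_root_exists b (- mu * (A + B))) as (s & Hs & Hsb & Es); [nra|].
  destruct (quadratic_inner_root_exists b (mu * (A - B)) Hb) as (d & Hdb & Ed).
  assert (Hds : d < s) by nra.
  exists ((s - d) / 2), ((s + d) / 2).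
  replace ((s - d) / 2 + (s + d) / 2) with s by field.
  replace ((s + d) / 2 - (s - d) / 2) with d by field.
  unfold equilibrium_distances; repeat split; try lra; nra.
Qed.

Section Solution.
Variables (p1 p2 : R).
Hypothesis Hdist : equilibrium_distances mu A B b p1 p2.

Lemma equilibrium_distances_gain_neg : A + B < 0.
Proof.
  destruct Hdist as (H1 & H2 & [_ Hs] & Es & _).
  destruct (quadratic_outer_root b _ (p1 + p2) ltac:(lra) Hs Es) as [Hk _]. nra.
Qed.

Lemma equilibrium_distances_sum :
  p1 + p2 = (1 + sqrt (1 + (2 * b * mu * (A + B))^2)) / (- mu * (A + B)).
Proof.
  destruct Hdist as (H1 & H2 & [_ Hs] & Es & _).
  destruct (quadratic_outer_root b _ (p1 + p2) ltac:(lra) Hs Es) as [_ ->].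
  replace (2 * b * (- mu * (A + B))) with (- (2 * b * mu * (A + B))) by ring.
  rewrite <- Rsqr_pow2, <- Rsqr_neg, Rsqr_pow2. reflexivity.
Qed.

Lemma equilibrium_distances_diff :
  A <> B -> p2 - p1 = (-1 + sqrt (1 + (2 * b * mu * (A - B))^2)) / (- mu * (A - B)).
Proof.
  intros HAB. destruct Hdist as (_ & _ & [Hd _] & _ & Ed).
  assert (Hc : mu * (A - B) <> 0) by (apply Rmult_integral_contrapositive; lra).
  rewrite (quadratic_inner_root b _ (p2 - p1) Hc Hd Ed).
  replace (2 * b * (mu * (A - B))) with (2 * b * mu * (A - B)) by ring.
  replace (- mu * (A - B)) with (- (mu * (A - B))) by ring. reflexivity.
Qed.

Lemma equilibrium_distances_eq : A = B -> p1 = p2.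
Proof.
  intros <-. destruct Hdist as (_ & _ & _ & _ & Ed).
  rewrite Rminus_diag, Rmult_0_r, !Rmult_0_l in Ed. lra.
Qed.

End Solution.
End EquilibriumDistances.

Theorem proposition3p1 (mu lam ab1 ab2 b : R)
  (Hmu : 0 < mu) (Hlam : 0 < lam < 1)
  (Ha1 : -1 <= ab1 <= 1) (Ha2 : -1 <= ab2 <= 1) (Hb : 0 < b) :
  ((exists r1 x1 : vec3, circling_equilibrium mu lam ab1 ab2 b r1 x1) <->
     ((lam * ab1 = (1 - lam) * ab2 /\ lam * ab1 < 0) \/
      (lam * ab1 <> (1 - lam) * ab2 /\ lam * ab1 + (1 - lam) * ab2 < 0)))
  /\
  (forall r1 x1 : vec3, circling_equilibrium mu lam ab1 ab2 b r1 x1 ->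
     xbar1b1 b r1 x1 = 0 /\ xbar1b2 b r1 x1 = 0 /\
     ((lam * ab1 = (1 - lam) * ab2 /\ lam * ab1 < 0) ->
        rho1b1 b r1 = / (- 4 * mu * lam * ab1) * (1 + sqrt (1 + (4 * mu * lam * ab1 * b) ^ 2)) /\
        rho1b2 b r1 = / (- 4 * mu * lam * ab1) * (1 + sqrt (1 + (4 * mu * lam * ab1 * b) ^ 2))) /\
     ((lam * ab1 <> (1 - lam) * ab2 /\ lam * ab1 + (1 - lam) * ab2 < 0) ->
        let rp := (1 + sqrt (1 + (2 * b * mu * (lam * ab1 + (1 - lam) * ab2)) ^ 2))
                  / (- mu * (lam * ab1 + (1 - lam) * ab2)) in
        let rm := (-1 + sqrt (1 + (2 * b * mu * (lam * ab1 - (1 - lam) * ab2)) ^ 2))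
                  / (- mu * (lam * ab1 - (1 - lam) * ab2)) in
        rho1b1 b r1 = (rp - rm) / 2 /\ rho1b2 b r1 = (rp + rm) / 2)).
Proof.
  set (A := lam * ab1). set (B := (1 - lam) * ab2).
  split.
  - split.
    + intros (r1 & x1 & Heq).
      destruct (circling_equilibrium_distances _ _ _ _ _ _ _ Heq) as (_ & _ & D).
      pose proof (equilibrium_distances_gain_neg mu A B b Hmu _ _ D).
      destruct (Req_dec A B); [left | right]; split; auto; lra.
    + intros HC.
      destruct (equilibrium_distances_exist mu A B b Hmu Hb) as (p1 & p2 & D);
        [destruct HC as [[] | []]; lra|].
      exact (equilibrium_distances_realized mu lam ab1 ab2 b p1 p2 Hb D).
  - intros r1 x1 Heq.
    destruct (circling_equilibrium_distances _ _ _ _ _ _ _ Heq) as (X1 & X2 & D).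
    pose proof (equilibrium_distances_sum mu A B b _ _ D) as Hs.
    split; [exact X1|]. split; [exact X2|]. split.
    + intros [HAB HA].
      pose proof (equilibrium_distances_eq mu A B b _ _ D HAB) as Hp.
      rewrite <- HAB in Hs.
      replace (2 * b * mu * (A + A)) with (4 * mu * lam * ab1 * b) in Hs by (unfold A; ring).
      assert (Hmid : rho1b1 b r1 = (rho1b1 b r1 + rho1b1 b r1) / 2) by field.
      rewrite <- Hp in Hs |- *. rewrite Hmid, Hs.
      unfold A in *. split; field; repeat split; intro; nra.
    + intros [HAB HA]. cbv zeta.
      rewrite <- Hs, <- (equilibrium_distances_diff mu A B b Hmu _ _ D HAB).
      split; field.
Qed.
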